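(* (i) For all $d\ge 0$, $1\le r\le d+1$ and $0\le j\le\lfloor (d-2)/2\rfloor$: $A(d+1,j,r)\le A(d+1,d-1-j,r)$. (ii) For all $d\ge1$ and $1\le r\le d$: $$A(d+1,0,r+1)\le A(d+1,1,r+1)\le\dots\le A(d+1,\lfloor d/2\rfloor,r+1)$$ and $$A(d+1,d,r+1)\le A(d+1,d-1,r+1)\le\dots\le A(d+1,\lceil d/2\rceil,r+1).$$
   Context: $S_d$ is the symmetric group on $[d]=\{1,\dots,d\}$. For $\sigma\in S_d$, its descent set is $D(\sigma)=\{i\in[d-1]:\sigma(i)>\sigma(i+1)\}$ and $\mathrm{des}(\sigma)=\#D(\sigma)$. For $0\le i\le d-1$ and $1\le j\le d$, $A(d,i,j)=\#\{\sigma\in S_d:\mathrm{des}(\sigma)=i,\ \sigma(1)=j\}$. *)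

From mathcomp Require Import all_boot all_fingroup.
Set Implicit Arguments. Unset Strict Implicit. Unset Printing Implicit Defensive.

(* A permutation sigma of [d] = {1..d} is modelled by s : 'S_d acting on
   'I_d = {0..d-1}; sigma(i) = (s (i-1)) + 1. *)

Definition pword d (s : 'S_d) : seq nat := [seq (val (s x)).+1 | x <- enum 'I_d].

Definition descents d (s : 'S_d) : seq nat :=
  [seq i <- iota 1 d.-1 | nth 0 (pword s) i.-1 > nth 0 (pword s) i].

Definition des d (s : 'S_d) : nat := size (descents s).

(* sigma(1) (equals 0, i.e. no value in [d], when d = 0) *)
Definition first_val d (s : 'S_d) : nat := head 0 (pword s).

Definition A (d i j : nat) : nat :=
  #|[set s : 'S_d | (des s == i) && (first_val s == j)]|.

From mathcomp Require Import all_boot all_fingroup zify.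
Set Implicit Arguments. Unset Strict Implicit. Unset Printing Implicit Defensive.

(* Deleting the first letter j of a permutation of [n+1] and
   standardizing gives a permutation of [n] starting with some k, and the
   deleted position is a descent iff k < j, whence the recurrence
     A(n+1, i, j) = sum_{k<j} A(n, i-1, k) + sum_{k>=j} A(n, i, k)   (A_rec).
   The symmetry of complementing letters,
     A(m, i, j) = A(m, m-1-i, m+1-j),                                 (A_sym)
   also follows from the recurrence, by induction on m.
   Call a sequence of length N symmetric unimodal if it is palindromic and
   increases towards its centre (N-1)/2.  By induction on m, every column
   j > m/2 of row m is a + shift b with a, b symmetric unimodal of lengths
   m and m-1 (column_decomp_right); by symmetry the mirror column m+1-j is
   then a + b.  In both cases the column increases from both ends towards
   the middle (A_column_unimodal), which yields both parts of the corollary. *)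

Definition shift (f : nat -> nat) (i : nat) : nat := if i is i'.+1 then f i' else 0.

Definition sym_unimodal (N : nat) (f : nat -> nat) : Prop :=
  [/\ forall i, N <= i -> f i = 0,
      forall i, i < N -> f i = f (N.-1 - i)
    & forall i j, i <= j -> i + j < N -> f i <= f j].

(* Monotonicity need only be checked off the axis i + j = N - 1, where it is
   an equality by symmetry. *)
Lemma sym_unimodalI N f :
  (forall i, N <= i -> f i = 0) -> (forall i, i < N -> f i = f (N.-1 - i)) ->
  (forall i j, i <= j -> i + j < N.-1 -> f i <= f j) -> sym_unimodal N f.
Proof.
move=> supp sym mono; split => // i j le_ij lt_N.
have [lt_N1|eq_N1] := ltnP (i + j) N.-1; first exact: mono.
by rewrite (sym i); [rewrite (_ : N.-1 - i = j) //|]; lia.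
Qed.

Lemma sym_unimodal_ext N f g : f =1 g -> sym_unimodal N f -> sym_unimodal N g.
Proof.
move=> fg [supp sym mono]; split=> [i|i|i j] *; rewrite -!fg.
- exact: supp.
- exact: sym.
- exact: mono.
Qed.

Lemma sym_unimodal0 N : sym_unimodal N (fun=> 0).
Proof. by []. Qed.

Lemma sym_unimodalD N f g :
  sym_unimodal N f -> sym_unimodal N g -> sym_unimodal N (fun i => f i + g i).
Proof.
move=> [f0 fsym fmono] [g0 gsym gmono]; split=> [i|i|i j] *.
- by rewrite f0 // g0.
- by rewrite fsym // gsym.
- by rewrite leq_add ?fmono ?gmono.
Qed.

Lemma sym_unimodal_sum N (r : seq nat) (F : nat -> nat -> nat) :
  (forall k, k \in r -> sym_unimodal N (F k)) ->
  sym_unimodal N (fun i => \sum_(k <- r) F k i).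
Proof.
elim: r => [|k r IH] Fr.
  by apply: sym_unimodal_ext (sym_unimodal0 N) => i; rewrite big_nil.
apply: sym_unimodal_ext (sym_unimodalD (Fr k (mem_head _ _)) (IH _)) => [i|k' k'r].
  by rewrite big_cons.
by apply: Fr; rewrite inE k'r orbT.
Qed.

Lemma sym_unimodal_half N f : sym_unimodal N (fun i => f i + f i) -> sym_unimodal N f.
Proof.
move=> [f0 fsym fmono]; split=> [i|i|i j] *.
- by apply/eqP; rewrite -double_eq0 -addnn; apply/eqP/f0.
- by apply: double_inj; rewrite -!addnn fsym.
- by rewrite -leq_double -!addnn fmono.
Qed.

Lemma shift_reflect N f i : sym_unimodal N f -> i <= N -> shift f i = f (N - i).
Proof.
case=> f0 fsym _; case: i => [|i] le_iN /=; first by rewrite subn0 f0.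
by rewrite fsym; [congr f|]; lia.
Qed.

Lemma sym_unimodal_shift N f : sym_unimodal N f -> sym_unimodal N.+2 (shift f).
Proof.
move=> fsu; have [f0 _ fmono] := fsu; apply: sym_unimodalI.
- by move=> [|i] lt_i /=; [|apply: f0]; lia.
- move=> [|i] lt_i /=; first by rewrite f0.
  by rewrite subSS (shift_reflect fsu) ?subKn; lia.
- by move=> [|i] [|j] //= *; apply: fmono; lia.
Qed.

Lemma sym_unimodal_shiftD N f :
  sym_unimodal N f -> sym_unimodal N.+1 (fun i => f i + shift f i).
Proof.
move=> fsu; have [f0 _ fmono] := fsu; apply: sym_unimodalI => /=.
- by move=> [|i] lt_i /=; rewrite !f0 //; lia.
- move=> i lt_i; rewrite (shift_reflect fsu) // (shift_reflect fsu (i := N - i)) ?leq_subr //.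
  by rewrite subKn // addnC.
- move=> i j le_ij lt_N; rewrite leq_add ?fmono //.
  by case: i j le_ij lt_N => [|i] [|j] //= *; apply: fmono; lia.
Qed.

Lemma sum_reflect (F : nat -> nat) a b c : a <= b <= c.+1 ->
  \sum_(a <= k < b) F k = \sum_(c.+1 - b <= k < c.+1 - a) F (c - k).
Proof.
elim: b => [|b IH] /andP[le_ab le_bc].
  by rewrite (_ : a = 0) ?subn0 ?big_geq //; lia.
have [le_ab'|lt_ba] := leqP a b; last first.
  by rewrite (_ : a = b.+1) ?big_geq //; lia.
rewrite big_nat_recr //= IH; last by lia.
rewrite (big_ltn (m := c.+1 - b.+1)); last by lia.
rewrite addnC (_ : c - (c.+1 - b.+1) = b); last by lia.
by rewrite (_ : (c.+1 - b.+1).+1 = c.+1 - b) //; lia.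
Qed.

Lemma shift_sum (r : seq nat) (F : nat -> nat -> nat) i :
  shift (fun i => \sum_(k <- r) F k i) i = \sum_(k <- r) shift (F k) i.
Proof. by case: i => [|i] //=; rewrite big1. Qed.

Fixpoint wdes (w : seq nat) : nat :=
  if w is x :: t then (if t is y :: _ then y < x else false) + wdes t else 0.

Lemma wdes_cons2 x y t : wdes [:: x, y & t] = (y < x) + wdes (y :: t).
Proof. by []. Qed.

Lemma size_descents_word (w : seq nat) :
  size [seq i <- iota 1 (size w).-1 | nth 0 w i.-1 > nth 0 w i] = wdes w.
Proof.
elim: w => [|x [|y t] IH] //.
rewrite wdes_cons2 -IH /= (iotaDl 1 1) filter_map.
set w := [:: x, y & t].
(* Positions 2.. of x :: y :: t are positions 1.. of y :: t. *)
have -> : [seq i <- iota 1 (size t) | preim (addn 1) (fun i => nth 0 w i < nth 0 w i.-1) i]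
    = [seq i <- iota 1 (size t) | nth 0 (y :: t) i < nth 0 (y :: t) i.-1].
  by apply: eq_in_filter => -[|k]; rewrite mem_iota.
by case: (y < x); rewrite /= size_map.
Qed.

Lemma des_wdes d (s : 'S_d) : des s = wdes (pword s).
Proof. by rewrite /des /descents -size_descents_word /pword size_map size_enum_ord. Qed.

Lemma wdes_map (f : nat -> nat) w : {mono f : a b / a < b} -> wdes (map f w) = wdes w.
Proof.
move=> fmono; elim: w => [|x [|y t] IH] //.
by rewrite !map_cons wdes_cons2 -map_cons IH wdes_cons2 fmono.
Qed.

Section FirstLetter.
Variable n : nat.

(* [lift_perm ord0 v s] is the permutation with first letter v.+1 whose
   remaining letters, standardized, form s. *)
Lemma pword_lift (v : 'I_n.+1) (s : 'S_n) :
  pword (lift_perm ord0 v s) = v.+1 :: map (fun u => u + (v < u)) (pword s).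
Proof.
rewrite /pword enum_ordSl /= lift_perm_id -!map_comp; congr (_ :: _).
apply: eq_map => x /=.
by rewrite lift_perm_lift /= /bump ltnS addSn addnC.
Qed.

Lemma first_val_lift (v : 'I_n.+1) (s : 'S_n) : first_val (lift_perm ord0 v s) = v.+1.
Proof. by rewrite /first_val pword_lift. Qed.

Lemma lift_first_bij : bijective (fun p : 'I_n.+1 * 'S_n => lift_perm ord0 p.1 p.2).
Proof.
apply: inj_card_bij; last by rewrite card_prod card_ord !card_Sn factS.
move=> [v s] [w t] /= eq_lift.
have eq_vw : v = w.
  by move/(congr1 (fun u : 'S_n.+1 => u ord0)): eq_lift; rewrite !lift_perm_id.
subst w; congr (_, _); apply/permP => x.
move/(congr1 (fun u : 'S_n.+1 => u (lift ord0 x))): eq_lift.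
by rewrite !lift_perm_lift => /lift_inj.
Qed.

End FirstLetter.

Lemma first_val_ord0 n (s : 'S_n.+1) : first_val s = (s ord0).+1.
Proof. by rewrite /first_val /pword enum_ordSl. Qed.

Lemma des_lift n (v : 'I_n.+2) (s : 'S_n.+1) :
  des (lift_perm ord0 v s) = (first_val s <= v) + des s.
Proof.
rewrite !des_wdes pword_lift /first_val.
have size_pword : size (pword s) = n.+1 by rewrite /pword size_map size_enum_ord.
case: (pword s) size_pword => [|u w] // _.
rewrite map_cons wdes_cons2; congr (_ + _); first by rewrite /=; lia.
rewrite (_ : _ :: _ = map (fun u => u + (v < u)) (u :: w)) // wdes_map //.
by move=> a b /=; lia.
Qed.

Lemma A_sum d i j : A d i j = \sum_(s : 'S_d | (des s == i) && (first_val s == j)) 1.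
Proof. by rewrite /A sum1dep_card. Qed.

Lemma A_first_letter m i (v : 'I_m.+2) :
  A m.+2 i v.+1 = \sum_(s : 'S_m.+1 | (first_val s <= v) + des s == i) 1.
Proof.
rewrite A_sum (reindex _ (onW_bij _ (lift_first_bij _))) /=.
under eq_bigl => p do rewrite des_lift first_val_lift eqSS andbC.
rewrite -(pair_big_dep (fun w : 'I_m.+2 => (w : nat) == v)
            (fun w (s : 'S_m.+1) => (first_val s <= w) + des s == i) (fun _ _ => 1)).
by rewrite (big_pred1 v) // => w; rewrite /= (inj_eq val_inj).
Qed.

Lemma A_first_two_letters m i (v : 'I_m.+2) :
  A m.+2 i v.+1 =
  \sum_(k < m.+1) (if k < v then shift (fun i => A m.+1 i k.+1) i else A m.+1 i k.+1).
Proof.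
rewrite A_first_letter (partition_big (fun s : 'S_m.+1 => s ord0) xpredT) //=.
apply: eq_bigr => k _.
rewrite (eq_bigl (fun s => ((k < v) + des s == i) && (first_val s == k.+1))); last first.
  move=> s; rewrite first_val_ord0 eqSS -val_eqE /=.
  by rewrite andbC [RHS]andbC; apply: andb_id2l => /eqP->.
case: (k < v); last by rewrite A_sum.
by case: i => [|i]; [apply: big_pred0 | rewrite /= A_sum].
Qed.

(* The basic recurrence: after removing the first letter j of a permutation
   of [n+1], the standardized tail starts with some k, and position 1 was a
   descent iff k < j. *)
Lemma A_rec n i j : 0 < n -> 1 <= j <= n.+1 ->
  A n.+1 i j = shift (fun i => \sum_(1 <= k < j) A n i k) i + \sum_(j <= k < n.+1) A n i k.
Proof.
case: n => [|m] // _; case: j => [|v] // /andP[_ lt_v].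
rewrite (@A_first_two_letters m i (Ordinal lt_v)) /=.
rewrite -(big_mkord xpredT (fun k => if k < v then shift (A m.+1 ^~ k.+1) i else A m.+1 i k.+1)).
rewrite (big_cat_nat _ (n := v)) //=.
rewrite shift_sum !big_add1 /=; congr (_ + _); apply: eq_big_nat => k /andP[lo hi].
- by rewrite hi.
- by rewrite ltnNge lo.
Qed.

Lemma des_le d (s : 'S_d) : des s <= d.-1.
Proof.
rewrite /des /descents size_filter.
by rewrite (leq_trans (count_size _ _)) // size_iota.
Qed.

Lemma A_vanish d i j : d.-1 < i -> A d i j = 0.
Proof.
move=> lt_di; rewrite A_sum big_pred0 // => s.
by apply/negbTE; apply: contraL lt_di => /andP[/eqP<- _]; rewrite -leqNgt des_le.
Qed.

Lemma A_row1 i : A 1 i 1 = (i == 0).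
Proof.
have pword1 (s : 'S_1) : pword s = [:: 1].
  by rewrite /pword enum_ordSl enum_ord0 /= (ord1 (s ord0)).
rewrite A_sum; under eq_bigl => s do rewrite des_wdes /first_val pword1 /= andbT.
by case: i => [|i]; [rewrite sum1_card card_Sn | apply: big_pred0].
Qed.

(* Complementing the letters of a permutation of [m] turns i descents into
   m - 1 - i and a first letter j into m + 1 - j; we obtain this symmetry
   from the recurrence by induction on m. *)
Lemma A_sym m i j : 1 <= j <= m -> i < m -> A m i j = A m (m.-1 - i) (m.+1 - j).
Proof.
elim: m i j => [|[|n] IH] i j j_range lt_im; first by lia.
  by rewrite (_ : j = 1) 1?(_ : i = 0) //; lia.
rewrite A_rec 1?[in RHS]A_rec //; try lia.
rewrite addnC /=; congr (_ + _).
- have [lt_in1|le_n1i] := ltnP i n.+1; last first.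
    rewrite (_ : n.+1 - i = 0) /=; last by lia.
    by rewrite big1_seq // => k _; rewrite A_vanish //; lia.
  rewrite (_ : n.+1 - i = (n - i).+1) /=; last by lia.
  rewrite (sum_reflect _ (c := n.+2)) ?subSnn; last by lia.
  apply: eq_big_nat => k k_range.
  by rewrite IH; [congr (A _ _ _)| |]; lia.
- case: i lt_im => [|i] lt_im /=.
    by rewrite big1_seq // => k _; rewrite A_vanish.
  rewrite (sum_reflect _ (c := n.+2)); last by lia.
  apply: eq_big_nat => k k_range.
  by rewrite IH; [congr (A _ _ _)| |]; lia.
Qed.

Definition column_decomp (m j : nat) : Prop :=
  exists a b, [/\ sym_unimodal m a, sym_unimodal m.-1 b & forall i, A m i j = a i + shift b i].

(* By the symmetry of A, the mirror column m + 1 - j is then a + b. *)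
Lemma column_decomp_reflect m j a b : 1 <= j <= m ->
  sym_unimodal m a -> sym_unimodal m.-1 b -> (forall i, A m i j = a i + shift b i) ->
  forall i, A m i (m.+1 - j) = a i + b i.
Proof.
move=> j_range asu bsu colj i; have [a0 asym _] := asu; have [b0 _ _] := bsu.
have [lt_im|le_mi] := ltnP i m; last by rewrite A_vanish ?a0 ?b0 //; lia.
rewrite A_sym; [|lia..].
rewrite (_ : m.+1 - (m.+1 - j) = j); last by lia.
rewrite colj (shift_reflect bsu); last by lia.
by rewrite [a i]asym // (_ : m.-1 - (m.-1 - i) = i) //; lia.
Qed.

(* A decomposed column plus its mirror is symmetric unimodal of length m:
   (a + shift b) + (a + b) = 2a + (b + shift b). *)
Lemma sym_unimodal_mirror_pair m k : 1 <= k <= m -> column_decomp m k ->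
  sym_unimodal m (fun i => A m i k + A m i (m.+1 - k)).
Proof.
move=> k_range [a [b [asu bsu colk]]].
have bsu' := sym_unimodal_shiftD bsu; rewrite prednK in bsu'; last by lia.
apply: sym_unimodal_ext (sym_unimodalD (sym_unimodalD asu asu) bsu') => i.
by rewrite colk (column_decomp_reflect k_range asu bsu colk) [RHS]addnACA [shift b i + _]addnC.
Qed.

(* A decomposed column plus its shifted mirror is symmetric unimodal of
   length m + 1: (a + shift b) + shift (a + b) = (a + shift a) + 2 shift b. *)
Lemma sym_unimodal_shifted_mirror_pair m k : 1 <= k <= m -> column_decomp m k ->
  sym_unimodal m.+1 (fun i => A m i k + shift (fun i => A m i (m.+1 - k)) i).
Proof.
move=> k_range [a [b [asu bsu colk]]].
have bsu' := sym_unimodal_shift bsu; rewrite (_ : m.-1.+2 = m.+1) in bsu'; last by lia.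
apply: sym_unimodal_ext
  (sym_unimodalD (sym_unimodal_shiftD asu) (sym_unimodalD bsu' bsu')) => -[|i] /=.
  by rewrite colk !addn0.
by rewrite colk (column_decomp_reflect k_range asu bsu colk) /=; lia.
Qed.

Lemma sym_unimodal_mirror_pair_any m k :
  (forall c, m < c.*2 -> c <= m -> column_decomp m c) -> 1 <= k <= m ->
  sym_unimodal m (fun i => A m i k + A m i (m.+1 - k)).
Proof.
move=> decomp k_range; have [lt_mk|le_km] := ltnP m k.*2.
  by apply: sym_unimodal_mirror_pair => //; apply: decomp; lia.
have k'_range : 1 <= m.+1 - k <= m by lia.
apply: sym_unimodal_ext (sym_unimodal_mirror_pair k'_range (decomp _ _ _)); try lia.
by move=> i; rewrite addnC subKn //; lia.
Qed.

(* The induction step: if the right half of row m decomposes, so does the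
   right half of row m + 1.  For m + 1 < 2j the recurrence gives
   A (m+1) i j = sum_{j <= k <= m} (A m i k + A m (i-1) (m+1-k))
               + sum_{m+2-j <= k < j} A m (i-1) k,
   where the first sum is a sum of shifted mirror pairs and the second one
   is half a sum of mirror pairs. *)
Lemma column_decomp_step m : 0 < m ->
  (forall c, m < c.*2 -> c <= m -> column_decomp m c) ->
  forall j, m.+1 < j.*2 -> j <= m.+1 -> column_decomp m.+1 j.
Proof.
move=> m_pos decomp j lt_mj le_jm.
exists (fun i => \sum_(j <= k < m.+1) (A m i k + shift (fun i => A m i (m.+1 - k)) i)).
exists (fun i => \sum_(m.+2 - j <= k < j) A m i k); split.
- apply: sym_unimodal_sum => k; rewrite mem_index_iota => k_range.
  by apply: sym_unimodal_shifted_mirror_pair; [lia | apply: decomp; lia].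
- apply: sym_unimodal_half.
  apply: sym_unimodal_ext (sym_unimodal_sum (r := index_iota (m.+2 - j) j)
    (F := fun k i => A m i k + A m i (m.+1 - k)) _) => [i|k].
    rewrite big_split /=; congr (_ + _).
    rewrite [RHS](sum_reflect _ (c := m.+1)); last by lia.
    by have -> : m.+2 - (m.+2 - j) = j by lia.
  by rewrite mem_index_iota => k_range; apply: sym_unimodal_mirror_pair_any => //; lia.
- move=> i; rewrite A_rec //; last by lia.
  case: i => [|i] /=; first by rewrite addn0; apply: eq_bigr => k _; rewrite addn0.
  rewrite big_split /= (big_cat_nat _ (n := m.+2 - j)) //=; try lia.
  rewrite (sum_reflect _ (c := m.+1) (a := 1)); last by lia.
  have -> : m.+2 - (m.+2 - j) = j by lia.
  by rewrite subn1 /=; lia.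
Qed.

Lemma column_decomp_right m j : 0 < m -> m < j.*2 -> j <= m -> column_decomp m j.
Proof.
elim: m j => [|[|m] IH] // j _ lt_mj le_jm.
  have -> : j = 1 by lia.
  exists (fun i => nat_of_bool (i == 0)), (fun=> 0); split => //.
    by apply: sym_unimodalI => [[|i]|[|i]|] //= *; lia.
  by move=> [|i]; rewrite A_row1.
by apply: column_decomp_step => // c *; apply: IH.
Qed.

Lemma A_column_unimodal d c i j : 1 <= c <= d.+1 -> i <= j -> i + j < d ->
  A d.+1 i c <= A d.+1 j c.
Proof.
move=> c_range le_ij lt_ijd; have [lt_dc|le_cd] := ltnP d.+1 c.*2.
  have [a [b [[_ _ amono] bsu colc]]] : column_decomp d.+1 c.
    by apply: column_decomp_right; lia.
  have [_ _ bmono] := sym_unimodal_shift bsu.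
  by rewrite !colc leq_add // ?amono ?bmono //; lia.
have c'_range : 1 <= d.+2 - c <= d.+1 by lia.
have [a [b [asu bsu colc']]] : column_decomp d.+1 (d.+2 - c).
  by apply: column_decomp_right; lia.
have colc := column_decomp_reflect c'_range asu bsu colc'.
rewrite (_ : d.+2 - (d.+2 - c) = c) in colc; last by lia.
have [_ _ amono] := asu; have [_ _ bmono] := bsu.
by rewrite !colc leq_add // ?amono ?bmono //; lia.
Qed.

Theorem corollary4p4 :
  (* (i): 0 <= j <= floor((d-2)/2) is written 2j + 2 <= d *)
  (forall d r j, 1 <= r <= d.+1 -> j.*2 + 2 <= d ->
     A d.+1 j r <= A d.+1 (d - 1 - j) r)
  /\
  (* (ii) *)
  (forall d r, 1 <= d -> 1 <= r <= d ->
     (forall k, k < d./2 -> A d.+1 k r.+1 <= A d.+1 k.+1 r.+1) /\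
     (forall k, uphalf d < k <= d -> A d.+1 k r.+1 <= A d.+1 k.-1 r.+1)).
Proof.
split=> [d r j r_range lt_jd | d r d_pos r_range]; first by apply: A_column_unimodal; lia.
split=> [k lt_kd | k k_range]; first by apply: A_column_unimodal; lia.
(* The decreasing half is the increasing half of the mirror column d + 1 - r. *)
rewrite A_sym 1?[leqRHS]A_sym /=; try lia.
by apply: A_column_unimodal; lia.
Qed.
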